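(* For any schema $\mathrm{Sch}$ with constraints $\Sigma$ and result-bounded methods, a Boolean conjunctive query $Q$ is access monotonically-determined over $\mathrm{Sch}$ if and only if the following holds: for any two instances $I_1,I_2$ satisfying $\Sigma$, if $I_1$ and $I_2$ have a common subinstance $I_{\mathrm{acc}}$ that is access-valid in $I_1$, then $Q(I_1)\subseteq Q(I_2)$.
   Context: Instances are finite or infinite sets of facts; $\mathrm{Adom}(I)$ is the set of values occurring in $I$; a subinstance is a subset of the facts. A schema $\mathrm{Sch}$ consists of a relational signature, constraints $\Sigma$ (first-order sentences), and access methods; each method $\mathrm{mt}$ is associated with a relation $R$ and a set of input positions of $R$ and may have a result bound $k\in\mathbb{N}_{>0}$. An access on $I$ is $(\mathrm{mt},\mathrm{AccBind})$ with $\mathrm{AccBind}$ mapping the input positions of $\mathrm{mt}$ to $\mathrm{Adom}(I)$; matching tuples $M$ are the $R$-tuples of $I$ agreeing with $\mathrm{AccBind}$ on the input positions. $J\subseteq M$ is a valid output if $J=M$ when there is no bound, and when there is result bound $k$, $|J|\le k$ and for all $j\le k$, $|M|\ge j$ implies $|J|\ge j$. An access selection maps each access to matching tuples; it is valid if all its images are valid outputs. For a valid access selection $\sigma$ on $I$: $\mathrm{AccPart}_0=\mathrm{accessible}_0=\emptyset$; $\mathrm{AccPart}_{i+1}$ is the union of the facts $\sigma(\mathrm{mt},\mathrm{AccBind})$ over all methods and all bindings with values in $\mathrm{accessible}_i$; $\mathrm{accessible}_{i+1}=\mathrm{Adom}(\mathrm{AccPart}_{i+1})$; an accessible part of $I$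 is $\bigcup_i\mathrm{AccPart}_i$ for some valid $\sigma$. $Q$ is access monotonically-determined over $\mathrm{Sch}$ if for all $I_1,I_2$ satisfying $\Sigma$, whenever some accessible part of $I_1$ is a subset of some accessible part of $I_2$, $Q(I_1)\subseteq Q(I_2)$. A subinstance $I_{\mathrm{acc}}$ of $I_1$ is access-valid in $I_1$ if for every access $(\mathrm{mt},\mathrm{AccBind})$ with a method of $\mathrm{Sch}$ and a binding with values in $\mathrm{Adom}(I_{\mathrm{acc}})$, there is a set $J$ of matching tuples contained in $I_{\mathrm{acc}}$ that is a valid output to that access in $I_1$. *)

From mathcomp Require Import all_boot.
From Stdlib Require List.

Set Implicit Arguments.
Unset Strict Implicit.
Unset Printing Implicit Defensive.

Record signature := Signature { Rel : finType; arity : Rel -> nat }.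

Section Formulas.
Variable sg : signature.

Inductive formula :=
| FAtom (r : Rel sg) (xs : (arity r).-tuple nat)
| FEq (x y : nat)
| FTrue
| FFalse
| FNot (p : formula)
| FAnd (p q : formula)
| FOr (p q : formula)
| FImp (p q : formula)
| FEx (x : nat) (p : formula)
| FAll (x : nat) (p : formula).

Fixpoint free (x : nat) (p : formula) : Prop :=
  match p with
  | FAtom r xs => exists i, tnth xs i = x
  | FEq a b => x = a \/ x = b
  | FTrue | FFalse => False
  | FNot p => free x p
  | FAnd p q | FOr p q | FImp p q => free x p \/ free x q
  | FEx y p | FAll y p => x <> y /\ free x p
  end.

Definition sentence (p : formula) : Prop := forall x, ~ free x p.

Record bcq := BCQ { cq_atoms : list {r : Rel sg & (arity r).-tuple nat} }.

Variable D : Type.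

Definition tup (r : Rel sg) := (arity r).-tuple D.

Record fact := Fact { frel : Rel sg; fargs : tup frel }.
Definition instance := fact -> Prop.

Definition Adom (I : instance) (v : D) : Prop :=
  exists f i, I f /\ tnth (fargs f) i = v.

Definition subinst (I J : instance) : Prop := forall f, I f -> J f.

Definition upd (env : nat -> D) (x : nat) (d : D) : nat -> D :=
  fun y => if y == x then d else env y.

(* Standard Tarskian semantics; quantifiers range over the value domain D. *)
Fixpoint holds (I : instance) (env : nat -> D) (p : formula) : Prop :=
  match p with
  | FAtom r xs => I (@Fact r (map_tuple env xs))
  | FEq a b => env a = env b
  | FTrue => True
  | FFalse => False
  | FNot p => ~ holds I env p
  | FAnd p q => holds I env p /\ holds I env q
  | FOr p q => holds I env p \/ holds I env q
  | FImp p q => holds I env p -> holds I env q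
  | FEx x p => exists d, holds I (upd env x d) p
  | FAll x p => forall d, holds I (upd env x d) p
  end.

Definition models (I : instance) (p : formula) : Prop :=
  forall env, holds I env p.

Definition cq_holds (I : instance) (q : bcq) : Prop :=
  exists env : nat -> D, forall a, List.In a (cq_atoms q) ->
    I (@Fact (projT1 a) (map_tuple env (projT2 a))).

End Formulas.

Definition atleast (T : Type) (j : nat) (P : T -> Prop) : Prop :=
  exists s : list T, List.length s = j /\ List.NoDup s /\ forall x, List.In x s -> P x.
Definition atmost (T : Type) (k : nat) (P : T -> Prop) : Prop :=
  exists s : list T, List.length s <= k /\ forall x, P x -> List.In x s.

Record schema := Schema {
  ssig : signature;
  Meth : finType;
  mrel : Meth -> Rel ssig;
  minp : forall m : Meth, {set 'I_(@arity ssig (mrel m))};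
  mbound : Meth -> option nat;
  mbound_pos : forall m k, mbound m = Some k -> 0 < k;
  constraints : list (formula ssig);
  constraints_sentences : forall p, List.In p constraints -> sentence p
}.

Section Access.
Variable Sch : schema.
Variable D : Type.

Local Notation sg := (ssig Sch).
Local Notation tupm m := (@tup sg D (mrel m)).
Local Notation inst := (@instance sg D).

Definition binding (m : Meth Sch) :=
  {ffun {i : 'I_(@arity sg (mrel m)) | i \in minp m} -> D}.

Definition binding_in (P : D -> Prop) m (b : binding m) : Prop :=
  forall i, P (b i).

Definition matching (I : inst) m (b : binding m) (t : tupm m) : Prop :=
  I (@Fact sg D (mrel m) t) /\ forall i, tnth t (val i) = b i.

Definition valid_output (I : inst) m (b : binding m) (J : tupm m -> Prop) : Prop :=
  (forall t, J t -> matching I b t) /\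
  match mbound m with
  | None => forall t, matching I b t -> J t
  | Some k => atmost k J /\
              forall j, j <= k -> atleast j (matching I b) -> atleast j J
  end.

Definition selection := forall m : Meth Sch, binding m -> tupm m -> Prop.

Definition valid_selection (I : inst) (sigma : selection) : Prop :=
  forall m (b : binding m), binding_in (Adom I) b -> valid_output I b (sigma m b).

Fixpoint AccPart (sigma : selection) (n : nat) : inst :=
  match n with
  | 0 => fun _ => False
  | n.+1 => fun f => exists m (b : binding m) (t : tupm m),
       binding_in (Adom (AccPart sigma n)) b /\ sigma m b t /\
       f = @Fact sg D (mrel m) t
  end.

Definition accessible_of (sigma : selection) : inst :=
  fun f => exists n, AccPart sigma n f.

Definition is_accessible_part (I A : inst) : Prop :=
  exists sigma, valid_selection I sigma /\
    forall f, A f <-> accessible_of sigma f.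

Definition satisfies (I : inst) : Prop :=
  forall p, List.In p (constraints Sch) -> models I p.

Definition AMonDet (Q : bcq sg) : Prop :=
  forall I1 I2 : inst, satisfies I1 -> satisfies I2 ->
    (exists A1 A2, is_accessible_part I1 A1 /\ is_accessible_part I2 A2 /\
                   subinst A1 A2) ->
    cq_holds I1 Q -> cq_holds I2 Q.

Definition access_valid (I1 Iacc : inst) : Prop :=
  subinst Iacc I1 /\
  forall m (b : binding m), binding_in (Adom Iacc) b ->
    exists J : tupm m -> Prop,
      (forall t, J t -> Iacc (@Fact sg D (mrel m) t)) /\ valid_output I1 b J.

End Access.

From mathcomp Require Import all_boot zify.
From Stdlib Require Import List Classical ClassicalEpsilon.

Set Implicit Arguments.
Unset Strict Implicit.
Unset Printing Implicit Defensive.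

(* An accessible part A of I1 lying inside an accessible part of I2 is itself a
   common subinstance of I1 and I2, and it is access-valid in I1: a binding
   over Adom(A) uses finitely many values, all accessible at some finite stage,
   so the outputs the selection returns for it are again in A.
   Conversely, given a common subinstance Iacc that is access-valid in I1,
   answer each access over Adom(Iacc) in I1 by an output lying inside Iacc.
   In I2 these tuples are still matching and within the result bound, so they
   can be padded to a valid output of I2. By induction on the stages, the
   resulting accessible part of I1 stays inside Iacc and inside the accessible
   part of I2. *)

Section Cardinality.
Variable T : Type.

Lemma atmost_NoDup k (S : T -> Prop) :
  atmost k S -> exists s, NoDup s /\ length s <= k /\ forall x, In x s <-> S x.
Proof.
move=> [c [ck cS]].
have decT (x y : T) : {x = y} + {x <> y} := excluded_middle_informative (x = y).
pose inS x := if excluded_middle_informative (S x) then true else false.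
have inSP x : inS x = true <-> S x.
  by rewrite /inS; case: excluded_middle_informative.
have memP x : In x (nodup decT (filter inS c)) <-> S x.
  rewrite nodup_In filter_In inSP; split=> [[] //|Sx]; split=> //; exact: cS.
exists (nodup decT (filter inS c)); split; first exact: NoDup_nodup.
split=> //; apply: leq_trans ck; apply/leP.
by apply: NoDup_incl_length; [exact: NoDup_nodup | move=> x /memP /cS].
Qed.

Lemma atleast_In_NoDup j (s : list T) :
  NoDup s -> j <= length s -> atleast j (fun x => In x s).
Proof.
move=> nds /leP js; exists (firstn j s); split; first exact: firstn_length_le.
rewrite -(firstn_skipn j s) in nds; split; first exact: NoDup_app_remove_r nds.
by move=> x Ix; rewrite -(firstn_skipn j s); apply: in_or_app; left.
Qed.

Lemma NoDup_complete (M : T -> Prop) n s :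
  NoDup s -> length s <= n -> (forall x, In x s -> M x) ->
  atmost n M \/
  exists s', NoDup s' /\ incl s s' /\ length s' = n /\ forall x, In x s' -> M x.
Proof.
move=> nds; elim: n => [|n IH] sn sM.
  by right; exists s; split=> //; split; [exact: incl_refl | split=> //; lia].
have [sn'|sn'] := leqP (length s) n; last first.
  by right; exists s; split=> //; split; [exact: incl_refl | split=> //; lia].
case: (IH sn' sM) => [[l [ln Ml]]|[s' [nds' [ss' [len' s'M]]]]].
  by left; exists l; split=> //; lia.
case: (classic (exists x, M x /\ ~ In x s')) => [[x [Mx s'x]]|noM].
  right; exists (x :: s'); split; first by constructor.
  split; first by move=> y /ss' ?; right.
  by split; [rewrite /= len' | move=> y /= [<-|/s'M]].
left; exists s'; split; first lia.
by move=> x Mx; apply: NNPP => s'x; apply: noM; exists x.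
Qed.

Lemma atmost_extension (M S : T -> Prop) k :
  (forall t, S t -> M t) -> atmost k S ->
  exists J : T -> Prop, (forall t, S t -> J t) /\ (forall t, J t -> M t) /\
    atmost k J /\ forall j, j <= k -> atleast j M -> atleast j J.
Proof.
move=> SM /atmost_NoDup [s [nds [sk sS]]].
have sM x : In x s -> M x by move/sS/SM.
case: (NoDup_complete nds sk sM) => [Mk|[s' [nds' [ss' [len' s'M]]]]].
  by exists M; split.
exists (fun x => In x s'); split; first by move=> t /sS /ss'.
split=> //; split; first by exists s'; rewrite len'.
by move=> j jk _; apply: atleast_In_NoDup; rewrite ?len'.
Qed.

End Cardinality.

Lemma finite_chain_bound (T : finType) (P : nat -> T -> Prop) :
  (forall n n' x, n <= n' -> P n x -> P n' x) ->
  (forall x, exists n, P n x) -> exists n, forall x, P n x.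
Proof.
move=> mono bound.
pose stage x := constructive_indefinite_description _ (bound x).
exists (\max_x sval (stage x)); move=> x.
exact: mono (leq_bigmax _) (svalP (stage x)).
Qed.

Section Access.
Variables (Sch : schema) (D : Type).
Local Notation sg := (ssig Sch).
Local Notation tupm m := (@tup sg D (mrel m)).
Local Notation inst := (@instance sg D).

Lemma Adom_subinst (I J : inst) v : subinst I J -> Adom I v -> Adom J v.
Proof. by move=> IJ [f [i [If e]]]; exists f, i; split=> //; apply: IJ. Qed.

Lemma valid_output_extension (I : inst) (m : Meth Sch) (b : binding D m)
    (S : tupm m -> Prop) :
  (forall t, S t -> matching I b t) ->
  (forall k, mbound m = Some k -> atmost k S) ->
  exists J, (forall t, S t -> J t) /\ valid_output I b J.
Proof.
move=> SM Sk; rewrite /valid_output; case E: (mbound m) => [k|].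
  have [J [SJ [JM [Jk Jl]]]] := atmost_extension SM (Sk k E).
  by exists J.
by exists (matching I b).
Qed.

Lemma valid_output_exists (I : inst) (m : Meth Sch) (b : binding D m) :
  exists J, valid_output I b J.
Proof.
have [J [_ vJ]] : exists J, (forall t, False -> J t) /\ valid_output I b J.
  by apply: valid_output_extension => // k _; exists nil.
by exists J.
Qed.

Lemma valid_output_transfer (I1 I2 : inst) (m : Meth Sch) (b : binding D m) J :
  valid_output I1 b J -> (forall t, J t -> I2 (@Fact sg D (mrel m) t)) ->
  exists J', (forall t, J t -> J' t) /\ valid_output I2 b J'.
Proof.
move=> [JM Jk] JI2; apply: valid_output_extension.
  by move=> t Jt; split; [exact: JI2 | exact: (JM t Jt).2].
by move: Jk => + k Ek; rewrite Ek => -[].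
Qed.

Lemma valid_selection_with (I : inst) (A : D -> Prop)
    (P : forall m, binding D m -> (tupm m -> Prop) -> Prop) :
  (forall m (b : binding D m), binding_in A b ->
     exists J, P m b J /\ valid_output I b J) ->
  exists sigma : selection Sch D,
    valid_selection I sigma /\ forall m b, binding_in A b -> P m b (sigma m b).
Proof.
move=> outA.
have out m (b : binding D m) :
    exists J, (binding_in A b -> P m b J) /\ valid_output I b J.
  case: (classic (binding_in A b)) => [/outA [J [PJ vJ]]|nA]; first by exists J.
  by have [J vJ] := @valid_output_exists I m b; exists J; split=> // /nA.
pose pick m b := constructive_indefinite_description _ (out m b).
by exists (fun m b => sval (pick m b)); split=> m b; have [] := svalP (pick m b).
Qed.

Lemma AccPart_subinst (sigma : selection Sch D) (A : inst) :
  (forall m (b : binding D m), binding_in (Adom A) b ->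
     forall t, sigma m b t -> A (@Fact sg D (mrel m) t)) ->
  forall n, subinst (AccPart sigma n) A.
Proof.
move=> closedA; elim=> [|n IH] f //= [m [b [t [hb [st ->]]]]].
by apply: closedA st => i; apply: Adom_subinst IH _.
Qed.

Lemma valid_selection_AccPart (I : inst) sigma n :
  valid_selection I sigma -> subinst (AccPart sigma n) I.
Proof. by move=> v; apply: AccPart_subinst => m b hb t /(proj1 (v m b hb)) []. Qed.

Lemma AccPart_mono (sigma1 sigma2 : selection Sch D) (A : inst) :
  (forall n, subinst (AccPart sigma1 n) A) ->
  (forall m (b : binding D m), binding_in (Adom A) b ->
     forall t, sigma1 m b t -> sigma2 m b t) ->
  forall n, subinst (AccPart sigma1 n) (AccPart sigma2 n).
Proof.
move=> subA incl12; elim=> [|n IH] f //= [m [b [t [hb [st ->]]]]].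
exists m, b, t; split; first by move=> i; apply: Adom_subinst IH _.
by split=> //; apply: incl12 st => i; apply: Adom_subinst (subA n) _.
Qed.

Lemma AccPart_succ (sigma : selection Sch D) n :
  subinst (AccPart sigma n) (AccPart sigma n.+1).
Proof.
elim: n => [|n IH] f //= [m [b [t [hb [st ->]]]]].
by exists m, b, t; split=> // i; apply: Adom_subinst IH _.
Qed.

Lemma AccPart_le (sigma : selection Sch D) n n' :
  n <= n' -> subinst (AccPart sigma n) (AccPart sigma n').
Proof. by move/subnK <-; elim: (n' - n) => [|d IH] f // /IH /AccPart_succ. Qed.

Lemma accessible_binding_stage (sigma : selection Sch D) (m : Meth Sch)
    (b : binding D m) :
  binding_in (Adom (accessible_of sigma)) b ->
  exists n, binding_in (Adom (AccPart sigma n)) b.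
Proof.
move=> hb; apply: (finite_chain_bound (P := fun n i => Adom (AccPart sigma n) (b i))).
  by move=> n n' i nn'; apply/Adom_subinst/AccPart_le.
by move=> i; have [f [j [[n Hf] e]]] := hb i; exists n, f, j.
Qed.

Lemma accessible_part_subinst (I A : inst) : is_accessible_part I A -> subinst A I.
Proof. by move=> [sigma [v eA]] f /eA [n]; apply: valid_selection_AccPart. Qed.

Lemma accessible_part_access_valid (I A : inst) :
  is_accessible_part I A -> access_valid I A.
Proof.
move=> pA; have AI := accessible_part_subinst pA; split=> // m b hb.
have [sigma [v eA]] := pA.
have [n hn] : exists n, binding_in (Adom (AccPart sigma n)) b.
  by apply: accessible_binding_stage => i; apply: Adom_subinst (hb i) => f /eA.
exists (sigma m b); split; last by apply: v => i; apply: Adom_subinst AI _.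
by move=> t st; apply/eA; exists n.+1, m, b, t.
Qed.

Lemma access_valid_accessible_parts (I1 I2 Iacc : inst) :
  subinst Iacc I2 -> access_valid I1 Iacc ->
  exists A1 A2, is_accessible_part I1 A1 /\ is_accessible_part I2 A2 /\
                subinst A1 A2.
Proof.
move=> sub2 [sub1 av].
have [sigma1 [v1 acc1]] := valid_selection_with av.
have [sigma2 [v2 incl12]] : exists sigma2, valid_selection I2 sigma2 /\
    forall m b, binding_in (Adom Iacc) b -> forall t, sigma1 m b t -> sigma2 m b t.
  apply: (valid_selection_with (P := fun m b J => forall t, sigma1 m b t -> J t)).
  move=> m b hb.
  apply: valid_output_transfer => [|t /(acc1 m b hb) /sub2 //].
  by apply: v1 => i; apply: Adom_subinst sub1 _.
exists (accessible_of sigma1), (accessible_of sigma2).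
split; first by exists sigma1.
split; first by exists sigma2.
move=> f [n Hf]; exists n.
exact: AccPart_mono (AccPart_subinst acc1) incl12 n f Hf.
Qed.

End Access.

Theorem mainTheorem3 (D : Type) (Sch : schema) (Q : bcq (ssig Sch)) :
  @AMonDet Sch D Q <->
  (forall I1 I2 : instance (ssig Sch) D,
     @satisfies Sch D I1 -> @satisfies Sch D I2 ->
     forall Iacc : instance (ssig Sch) D,
       subinst Iacc I1 -> subinst Iacc I2 -> @access_valid Sch D I1 Iacc ->
       cq_holds I1 Q -> cq_holds I2 Q).
Proof.
split=> [amd I1 I2 s1 s2 Iacc _ sub2 av|cond I1 I2 s1 s2 [A1 [A2 [p1 [p2 sub12]]]]].
  exact: amd s1 s2 (access_valid_accessible_parts sub2 av).
apply: (cond I1 I2 s1 s2 A1).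
- exact: accessible_part_subinst p1.
- by move=> f /sub12 /(accessible_part_subinst p2).
- exact: accessible_part_access_valid p1.
Qed.
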